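(* Let $\Sigma=b^2M_nQ\Psi Q^\top M_n\in\mathbb R^{n\times n}$ be the steady-state covariance of the observables (notation in the context). Let $\psi_1=0$ be the eigenvalue of $\Sigma$ with eigenvector $\mathbf 1_n$, and let $\psi_2\le\dots\le\psi_n$ denote the remaining eigenvalues of $\Sigma$ (with multiplicity). Set $\tilde\psi_2=\psi_2(1-\frac1n)$ and $\tilde\psi_n=\psi_n(1-\frac1n)$. Then every diagonal entry $\sigma_i^2=\Sigma_{ii}$ satisfies $\tilde\psi_2\le\sigma_i^2\le\tilde\psi_n$ for all $i=1,\dots,n$.
   Context: $L$ is the Laplacian of a connected undirected simple graph with positive edge weights, $L=Q\Lambda Q^\top$, $Q=[q_1|\dots|q_n]$ orthogonal, $q_1=\mathbf 1_n/\sqrt n$, $\Lambda=\mathrm{diag}(0,\lambda_2,\dots,\lambda_n)$ with $0<\lambda_2\le\dots\le\lambda_n$; the delay satisfies $0\le\tau<\pi/(2\lambda_n)$; $b\neq0$; $M_n=I_n-\frac1n\mathbf 1_n\mathbf 1_n^\top$; $\Psi=\mathrm{diag}(0,\psi(\lambda_2),\dots,\psi(\lambda_n))$ with $\psi(\lambda)=\frac{\cos(\lambda\tau)}{2\lambda(1-\sin(\lambda\tau))}$. *)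

From HB Require Import structures.
From mathcomp Require Import all_boot all_order all_algebra.
From mathcomp Require Import reals trigo.
Set Implicit Arguments. Unset Strict Implicit. Unset Printing Implicit Defensive.
Import Order.TTheory GRing.Theory Num.Theory.
Local Open Scope ring_scope.

(* Convention: the paper's number of agents is N = n.+2 (so N >= 2);
   indices are 'I_n.+2, paper index k corresponds to ordinal k-1. *)

Definition laplacian (R : ringType) (N : nat) (W : 'M[R]_N) : 'M[R]_N :=
  \matrix_(i, j) ((if i == j then \sum_k W i k else 0) - W i j).

Definition conn_simple_weighted (R : realDomainType) (N : nat) (W : 'M[R]_N) : Prop :=
  [/\ W^T = W,
      forall i j, 0 <= W i j,
      forall i, W i i = 0
    & forall i j, connect (fun a b => 0 < W a b) i j].

Definition centering (R : fieldType) (N : nat) : 'M[R]_N :=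
  1%:M - (N%:R)^-1 *: const_mx 1.

Definition psi (R : realType) (tau lam : R) : R :=
  cos (lam * tau) / (2 * lam * (1 - sin (lam * tau))).

Definition Psi_mx (R : realType) (n : nat) (tau : R) (lam : 'I_n.+2 -> R) : 'M[R]_n.+2 :=
  diag_mx (\row_i (if i == ord0 then 0 else psi tau (lam i))).

Definition Sigma_mx (R : realType) (n : nat) (b tau : R) (Q : 'M[R]_n.+2)
  (lam : 'I_n.+2 -> R) : 'M[R]_n.+2 :=
  b ^+ 2 *: (centering R n.+2 *m Q *m Psi_mx tau lam *m Q^T *m centering R n.+2).

From HB Require Import structures.
From mathcomp Require Import all_boot all_order all_algebra.
From mathcomp Require Import reals trigo.
Import Order.TTheory GRing.Theory Num.Theory.
Local Open Scope ring_scope.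

(* Since the first column of Q is constant, every other column of the
   orthogonal matrix Q sums to zero; as Psi kills the first column, the
   centering matrices act trivially and Sigma = Q (b^2 Psi) Q^T.  Each column
   q_k (k > 1) of Q is then an eigenvector of Sigma for the nonzero eigenvalue
   b^2 psi(lam_k), which must lie between psi_2 and psi_n.  Finally
   Sigma_ii = sum_(k > 1) Q_ik^2 b^2 psi(lam_k), a combination with weights
   summing to 1 - Q_i1^2 = 1 - 1/n. *)

Section Centering.

Variables (R : fieldType) (N : nat).

Lemma centering_tr : (centering R N)^T = centering R N.
Proof. by rewrite /centering linearB /= linearZ /= tr_scalar_mx trmx_const. Qed.

Lemma centering_mulmx_id m (A : 'M[R]_(N, m)) :
  (forall j, \sum_i A i j = 0) -> centering R N *m A = A.
Proof.
move=> A_col0; rewrite /centering mulmxBl mul1mx -scalemxAl.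
have -> : (const_mx 1 : 'M[R]_N) *m A = 0.
  apply/matrixP => i j; rewrite !mxE -[RHS](A_col0 j).
  by apply: eq_bigr => k _; rewrite mxE mul1r.
by rewrite scaler0 subr0.
Qed.

End Centering.

Lemma orthogonal_col_sum0 {R : idomainType} {n} {Q : 'M[R]_n.+1} {c : R} :
  Q^T *m Q = 1%:M -> c != 0 -> (forall i, Q i ord0 = c) ->
  forall j, j != ord0 -> \sum_i Q i j = 0.
Proof.
move=> QtQ c_neq0 Q_col0 j j_neq0.
have := congr1 (fun M : 'M[R]_n.+1 => M ord0 j) QtQ.
rewrite !mxE [ord0 == j]eq_sym (negbTE j_neq0).
under eq_bigr => k _ do rewrite mxE Q_col0.
by rewrite -mulr_sumr => /eqP; rewrite mulf_eq0 (negbTE c_neq0) => /eqP.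
Qed.

Lemma centering_conj_diag_mx {R : fieldType} {n} {Q : 'M[R]_n.+1} {d : 'rV[R]_n.+1} :
  d 0 ord0 = 0 -> (forall j, j != ord0 -> \sum_i Q i j = 0) ->
  let S := Q *m diag_mx d *m Q^T in
  centering R n.+1 *m S *m centering R n.+1 = S.
Proof.
move=> d0 Q_col_sum0 S.
have MS : centering R n.+1 *m S = S.
  rewrite /S mulmxA centering_mulmx_id // => j.
  under eq_bigr do rewrite mul_mx_diag mxE.
  rewrite -mulr_suml; have [->|/Q_col_sum0->] := eqVneq j ord0; last by rewrite mul0r.
  by rewrite d0 mulr0.
have S_sym : S^T = S by rewrite /S !trmx_mul trmxK tr_diag_mx mulmxA.
by rewrite MS -[LHS]trmxK trmx_mul centering_tr S_sym MS S_sym.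
Qed.

Lemma eigenvalue_conj_diag_mx {R : fieldType} {n} {Q : 'M[R]_n} (d : 'rV[R]_n) k :
  Q^T *m Q = 1%:M -> eigenvalue (Q *m diag_mx d *m Q^T) (d 0 k).
Proof.
move=> QtQ; apply/eigenvalueP; exists (row k Q^T).
  by rewrite !mulmxA -row_mul QtQ -row_mul mul1mx row_diag_mx -scalemxAl -rowE.
apply/eqP => /(congr1 (mulmx^~ Q)); rewrite -row_mul QtQ mul0mx.
by move/rowP/(_ k); rewrite !mxE eqxx => /eqP; rewrite oner_eq0.
Qed.

Lemma char_poly_root_eq {R : fieldType} {n m} {A : 'M[R]_n} {s : 'I_m -> R} {a : R} :
  char_poly A = 'X * \prod_j ('X - (s j)%:P) -> eigenvalue A a -> a != 0 ->
  exists j, a = s j.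
Proof.
rewrite eigenvalue_root_char => -> + a_neq0.
rewrite /root hornerM hornerX horner_prod mulf_eq0 (negbTE a_neq0) /=.
rewrite prodf_seq_eq0 => /hasP[j _ /=]; rewrite !hornerE subr_eq0 => /eqP->.
by exists j.
Qed.

Lemma conj_diag_mx_diag_bounds (R : realDomainType) n (Q : 'M[R]_n.+1)
    (d : 'rV[R]_n.+1) (lo hi : R) i :
  Q *m Q^T = 1%:M -> d 0 ord0 = 0 -> (forall k, k != ord0 -> lo <= d 0 k <= hi) ->
  lo * (1 - Q i ord0 ^+ 2) <= (Q *m diag_mx d *m Q^T) i i <= hi * (1 - Q i ord0 ^+ 2).
Proof.
move=> QQt d0 d_bnd.
have -> : (Q *m diag_mx d *m Q^T) i i = \sum_(k | k != ord0) Q i k ^+ 2 * d 0 k.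
  rewrite mul_mx_diag mxE (bigD1 ord0) //= !mxE d0 mulr0 mul0r add0r.
  by apply: eq_bigr => k _; rewrite !mxE mulrAC expr2.
have -> : 1 - Q i ord0 ^+ 2 = \sum_(k | k != ord0) Q i k ^+ 2.
  have := congr1 (fun M : 'M[R]_n.+1 => M i i) QQt.
  rewrite !mxE eqxx mulr1n (bigD1 ord0) //= !mxE => <-.
  by rewrite -expr2 addrC addrK; apply: eq_bigr => k _; rewrite mxE expr2.
rewrite !mulr_sumr; apply/andP; split; apply: ler_sum => k /d_bnd/andP[lo_d d_hi].
  by rewrite mulrC ler_wpM2l ?sqr_ge0.
by rewrite [hi * _]mulrC ler_wpM2l ?sqr_ge0.
Qed.

Section Psi.

Variable R : realType.

Lemma sin_lt1 (x : R) : 0 < cos x -> sin x < 1.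
Proof.
move=> cos_gt0; rewrite lt_neqAle sin_le1 andbT; apply/eqP => sin1.
move: (cos2Dsin2 x); rewrite sin1 expr1n -[X in _ = X]add0r => /addIr/eqP.
by rewrite sqrf_eq0 (gt_eqF cos_gt0).
Qed.

Lemma psi_gt0 (tau lam : R) :
  0 < lam -> -(pi / 2) < lam * tau < pi / 2 -> 0 < psi tau lam.
Proof.
move=> lam_gt0 /cos_gt0_pihalf cos_gt0.
by rewrite /psi divr_gt0 // !mulr_gt0 // subr_gt0 sin_lt1.
Qed.

Lemma psi_gt0_delay {tau lam lam_max : R} :
  0 < lam -> lam <= lam_max -> 0 <= tau -> tau < pi / (2 * lam_max) ->
  0 < psi tau lam.
Proof.
move=> lam_gt0 lam_le t_ge0 t_lt; apply: psi_gt0 => //.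
have lam_max_gt0 : 0 < lam_max := lt_le_trans lam_gt0 lam_le.
have pi2_gt0 : 0 < pi / 2 :> R by rewrite divr_gt0 ?pi_gt0.
apply/andP; split; first by rewrite (lt_le_trans _ (mulr_ge0 (ltW lam_gt0) t_ge0)) // oppr_lt0.
apply: (le_lt_trans (ler_wpM2r t_ge0 lam_le)).
by rewrite mulrC -ltr_pdivlMr // -mulrA -invfM.
Qed.

End Psi.

Theorem lemma9 (R : realType) (n : nat) (W : 'M[R]_n.+2) (Q : 'M[R]_n.+2)
  (lam : 'I_n.+2 -> R) (tau b : R) (s : 'I_n.+1 -> R) :
  conn_simple_weighted W ->
  Q *m Q^T = 1%:M ->
  (forall i, Q i ord0 = (Num.sqrt (n.+2)%:R)^-1) ->
  lam ord0 = 0 ->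
  (forall i : 'I_n.+2, i != ord0 -> 0 < lam i) ->
  (forall i j : 'I_n.+2, (i <= j)%N -> lam i <= lam j) ->
  laplacian W = Q *m diag_mx (\row_i lam i) *m Q^T ->
  0 <= tau -> tau < pi / (2 * lam ord_max) ->
  b != 0 ->
  (* s lists the eigenvalues of Sigma other than psi_1 = 0 (eigenvector 1),
     with multiplicity, in nondecreasing order *)
  (forall i j : 'I_n.+1, (i <= j)%N -> s i <= s j) ->
  char_poly (Sigma_mx b tau Q lam) = 'X * \prod_i ('X - (s i)%:P) ->
  forall i : 'I_n.+2,
    s ord0 * (1 - ((n.+2)%:R)^-1) <= Sigma_mx b tau Q lam i i /\
    Sigma_mx b tau Q lam i i <= s ord_max * (1 - ((n.+2)%:R)^-1).
Proof.
move=> _ QQt Q_col0 _ lam_gt0 lam_mono _ tau_ge0 tau_lt b_neq0 s_mono chi_Sigma i.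
have QtQ := mulmx1C QQt.
have sqrtN_gt0 : 0 < Num.sqrt (n.+2)%:R :> R by rewrite sqrtr_gt0 ltr0Sn.
have Q_col_sum0 := orthogonal_col_sum0 QtQ (invr_neq0 (lt0r_neq0 sqrtN_gt0)) Q_col0.
set d := b ^+ 2 *: \row_k (if k == ord0 then 0 else psi tau (lam k)).
have d0 : d 0 ord0 = 0 by rewrite !mxE eqxx mulr0.
have SigmaE : Sigma_mx b tau Q lam = Q *m diag_mx d *m Q^T.
  rewrite -(centering_conj_diag_mx d0 Q_col_sum0) /d linearZ /=.
  by rewrite -scalemxAr -scalemxAl -scalemxAr -scalemxAl /Sigma_mx !mulmxA.
have Qi0 : Q i ord0 ^+ 2 = (n.+2)%:R^-1 by rewrite Q_col0 exprVn sqr_sqrtr ?ler0n.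
rewrite SigmaE -Qi0; apply/andP/conj_diag_mx_diag_bounds => // k k_neq0.
have dk_gt0 : 0 < d 0 k.
  rewrite !mxE (negbTE k_neq0) mulr_gt0 ?exprn_even_gt0 //.
  by apply: psi_gt0_delay (lam_gt0 _ k_neq0) _ tau_ge0 tau_lt; rewrite lam_mono // -ltnS.
have := eigenvalue_conj_diag_mx d k QtQ; rewrite -SigmaE.
case/(char_poly_root_eq chi_Sigma)/(_ (lt0r_neq0 dk_gt0))=> j ->.
by rewrite !s_mono // -ltnS.
Qed.
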